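(* For all real numbers $a,b,c>0$, \[ \frac{54abc + (a+b+c)^{3}}{\left(\sqrt{a^{2}+2bc} + \sqrt{2ab+c^{2}} + \sqrt{2ac+b^{2}}\right)^{2}} \leq a+b+c. \] *)

From Stdlib Require Import Reals.

(* The radicands sum to (a + b + c)^2, so after expanding the square of the
   denominator the inequality reduces to 27abc <= (a + b + c)(xy + yz + zx),
   where x, y, z are the three square roots.  With g the cube root of abc,
   AM-GM gives a + b + c >= 3g and a^2 + 2bc = a^2 + bc + bc >= 3g^2 (and
   likewise for the other radicands), so each product xy is at least 3g^2. *)
From Stdlib Require Import Reals Lra Psatz.
Open Scope R_scope.

Lemma pow3_le_reg (u t : R) : 0 <= t -> u ^ 3 <= t ^ 3 -> u <= t.
Proof.
  intros Ht Hut.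
  destruct (Rle_lt_dec u t) as [Hle | Hlt]; [exact Hle |].
  assert (t * t < u * u) by nra.
  assert (t * t * t <= t * t * u) by nra.
  assert (t * t * u < u * u * u) by nra.
  simpl in Hut; lra.
Qed.

Lemma amgm3 (u v w : R) :
  0 <= u -> 0 <= v -> 0 <= w -> 27 * (u * v * w) <= (u + v + w) ^ 3.
Proof.
  intros Hu Hv Hw.
  assert (Hid : (u + v + w) ^ 3 - 27 * (u * v * w)
    = / 2 * ((u + v + w) * ((u - v) ^ 2 + (v - w) ^ 2 + (w - u) ^ 2))
      + 3 * (u * (v - w) ^ 2 + v * (w - u) ^ 2 + w * (u - v) ^ 2)) by field.
  pose proof (pow2_ge_0 (u - v)); pose proof (pow2_ge_0 (v - w));
    pose proof (pow2_ge_0 (w - u)).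
  assert (0 <= (u + v + w) * ((u - v) ^ 2 + (v - w) ^ 2 + (w - u) ^ 2)) by nra.
  assert (0 <= u * (v - w) ^ 2 + v * (w - u) ^ 2 + w * (u - v) ^ 2) by nra.
  lra.
Qed.

Lemma amgm3_cbrt (u v w g : R) :
  0 <= u -> 0 <= v -> 0 <= w -> g ^ 3 = u * v * w -> 3 * g <= u + v + w.
Proof.
  intros Hu Hv Hw Hg.
  apply pow3_le_reg; [lra |].
  replace ((3 * g) ^ 3) with (27 * g ^ 3) by ring.
  rewrite Hg; exact (amgm3 u v w Hu Hv Hw).
Qed.

Lemma cube_root_exists (p : R) : 0 < p -> exists g, 0 < g /\ g ^ 3 = p.
Proof.
  intros Hp; exists (Rpower p (1 / 3)); split.
  - apply exp_pos.
  - rewrite <- Rpower_pow by apply exp_pos.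
    rewrite Rpower_mult.
    replace (1 / 3 * INR 3) with 1 by (simpl; field).
    exact (Rpower_1 p Hp).
Qed.

Lemma sq_add_twice_mul_ge (q r t g : R) :
  0 <= q -> 0 <= r -> 0 <= t -> g ^ 3 = q * r * t ->
  3 * g ^ 2 <= q ^ 2 + 2 * r * t.
Proof.
  intros Hq Hr Ht Hg.
  replace (q ^ 2 + 2 * r * t) with (q ^ 2 + r * t + r * t) by ring.
  apply amgm3_cbrt; try nra.
  replace ((g ^ 2) ^ 3) with ((g ^ 3) ^ 2) by ring.
  rewrite Hg; ring.
Qed.

Lemma sqrt_mul_ge (m X Y : R) :
  0 <= m -> m <= X -> m <= Y -> m <= sqrt X * sqrt Y.
Proof.
  intros Hm HX HY.
  rewrite <- sqrt_mult by lra.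
  rewrite <- (sqrt_square m) at 1 by exact Hm.
  apply sqrt_le_1_alt; nra.
Qed.

Lemma div_sq_sum_sqrt_le (s p X Y Z : R) :
  0 < s -> 0 <= X -> 0 <= Y -> 0 <= Z -> X + Y + Z = s ^ 2 ->
  27 * p <= s * (sqrt X * sqrt Y + sqrt Y * sqrt Z + sqrt Z * sqrt X) ->
  (54 * p + s ^ 3) / (sqrt X + sqrt Y + sqrt Z) ^ 2 <= s.
Proof.
  intros Hs HX HY HZ Hsum Hp.
  pose proof (pow2_sqrt X HX); pose proof (pow2_sqrt Y HY);
    pose proof (pow2_sqrt Z HZ).
  pose proof (sqrt_pos X); pose proof (sqrt_pos Y); pose proof (sqrt_pos Z).
  assert (Hsq : (sqrt X + sqrt Y + sqrt Z) ^ 2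
    = s ^ 2 + 2 * (sqrt X * sqrt Y + sqrt Y * sqrt Z + sqrt Z * sqrt X)) by nra.
  assert (Hden : 0 < (sqrt X + sqrt Y + sqrt Z) ^ 2).
  { rewrite Hsq.
    assert (0 <= sqrt X * sqrt Y + sqrt Y * sqrt Z + sqrt Z * sqrt X)
      by (repeat apply Rplus_le_le_0_compat; apply Rmult_le_pos; assumption).
    nra. }
  apply (Rmult_le_reg_r _ _ _ Hden).
  unfold Rdiv; rewrite Rmult_assoc, Rinv_l, Rmult_1_r by lra.
  rewrite Hsq; nra.
Qed.

Theorem mainTheorem8 (a b c : R) (ha : 0 < a) (hb : 0 < b) (hc : 0 < c) :
  (54 * a * b * c + (a + b + c) ^ 3) /
    (sqrt (a ^ 2 + 2 * b * c) + sqrt (2 * a * b + c ^ 2) + sqrt (2 * a * c + b ^ 2)) ^ 2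
  <= a + b + c.
Proof.
  destruct (cube_root_exists (a * b * c)) as (g & Hg & Hg3).
  { repeat apply Rmult_lt_0_compat; assumption. }
  assert (H1 : 3 * g ^ 2 <= a ^ 2 + 2 * b * c)
    by (apply sq_add_twice_mul_ge; lra).
  assert (H2 : 3 * g ^ 2 <= 2 * a * b + c ^ 2).
  { assert (Hcab : g ^ 3 = c * a * b) by (rewrite Hg3; ring).
    pose proof (sq_add_twice_mul_ge c a b g ltac:(lra) ltac:(lra) ltac:(lra) Hcab).
    lra. }
  assert (H3 : 3 * g ^ 2 <= 2 * a * c + b ^ 2).
  { assert (Hbac : g ^ 3 = b * a * c) by (rewrite Hg3; ring).
    pose proof (sq_add_twice_mul_ge b a c g ltac:(lra) ltac:(lra) ltac:(lra) Hbac).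
    lra. }
  assert (Hs : 3 * g <= a + b + c) by (apply amgm3_cbrt; lra).
  replace (54 * a * b * c) with (54 * (a * b * c)) by ring.
  apply div_sq_sum_sqrt_le; try nra.
  assert (Hm : 0 <= 3 * g ^ 2) by nra.
  pose proof (sqrt_mul_ge _ _ _ Hm H1 H2);
    pose proof (sqrt_mul_ge _ _ _ Hm H2 H3);
    pose proof (sqrt_mul_ge _ _ _ Hm H3 H1).
  rewrite <- Hg3; nra.
Qed.
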